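(* Let $\mathfrak a$ be an ideal of a commutative ring $R$. (1) Let $f,g_1,\dots,g_k\in R[X]$ be monic with $f=g_1\cdots g_k$. If each $g_i$ is $\mathfrak a$-Weierstrass, then $f$ is $\mathfrak a$-Weierstrass. (2) Let $f,g_1,\dots,g_k\in R[[X]]$ with $f=g_1\cdots g_k$ and let $n\ge0$. If each $g_i$ is $\mathfrak a$-distinguished of order $n_i$ for some integers $n_i\ge0$ with $n=n_1+\cdots+n_k$, then $f$ is $\mathfrak a$-distinguished of order $n$. Moreover, if $\mathfrak a$ is prime, the converses of (1) and (2) hold: in (1), if $f$ is $\mathfrak a$-Weierstrass then each $g_i$ is $\mathfrak a$-Weierstrass; in (2), if $f$ is $\mathfrak a$-distinguished of order $n$ then each $g_i$ is $\mathfrak a$-distinguished of some order $n_i$ with $n=n_1+\cdots+n_k$.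
   Context: A polynomial $f\in R[X]$ is $\mathfrak a$-Weierstrass if it is monic and its coefficients of $X^i$ for $i<\deg f$ lie in $\mathfrak a$. A series $f\in R[[X]]$ is $\mathfrak a$-distinguished of order $n$ if the coefficient of $X^n$ is a unit modulo $\mathfrak a$ and the coefficients of $X^i$ for $i<n$ lie in $\mathfrak a$. *)

From HB Require Import structures.
From mathcomp Require Import all_boot all_order all_algebra.
Set Implicit Arguments. Unset Strict Implicit. Unset Printing Implicit Defensive.
Import GRing.Theory.
Local Open Scope ring_scope.

(* An ideal of a commutative ring R, given as a predicate (not necessarily
   proper: a = R is allowed, as in the paper). *)
Definition is_ideal (R : comNzRingType) (a : {pred R}) : Prop :=
  [/\ 0 \in a,
      (forall x y, x \in a -> y \in a -> x + y \in a) &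
      (forall r x, x \in a -> r * x \in a)].

Definition is_prime_ideal (R : comNzRingType) (a : {pred R}) : Prop :=
  [/\ is_ideal a, 1 \notin a & prime_idealr_closed a].

Definition unit_mod (R : comNzRingType) (a : {pred R}) (c : R) : Prop :=
  exists u : R, c * u - 1 \in a.

Definition weierstrass (R : comNzRingType) (a : {pred R}) (f : {poly R}) : Prop :=
  f \is monic /\ (forall i, (i < (size f).-1)%N -> f`_i \in a).

Definition powser (R : comNzRingType) := nat -> R.

Definition ps_one (R : comNzRingType) : powser R := fun n => (n == 0)%:R.

Definition ps_mul (R : comNzRingType) (f g : powser R) : powser R :=
  fun n => \sum_(i < n.+1) f i * g (n - i)%N.

Definition distinguished (R : comNzRingType) (a : {pred R}) (f : powser R) (n : nat)
  : Prop :=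
  unit_mod a (f n) /\ (forall i, (i < n)%N -> f i \in a).

From HB Require Import structures.
From mathcomp Require Import all_boot all_order all_algebra.
From mathcomp Require Import zify ring.
Import GRing.Theory.
Local Open Scope ring_scope.

(* The (m + l)-th coefficient of p q is p_m q_l plus terms that lie in a
   whenever the coefficients of p below m and of q below l do; so distinguished
   orders add under multiplication, and a polynomial is a-Weierstrass exactly
   when it is monic and its coefficient series is a-distinguished of order its
   degree.  When a is prime, the product p_m q_l of the first coefficients
   outside a stays outside a, which pins down the orders of the factors and
   gives the converses. *)

Lemma predn_size_monicM (R : comNzRingType) (p q : {poly R}) :
  p \is monic -> q \is monic -> (size (p * q)).-1 = ((size p).-1 + (size q).-1)%N.
Proof.
move=> mp mq; rewrite size_monicM ?monic_neq0 //.
by have := monic_neq0 mp; have := monic_neq0 mq; rewrite -!size_poly_gt0; lia.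
Qed.

Section IdealArithmetic.
Set Implicit Arguments.
Unset Strict Implicit.
Variables (R : comNzRingType) (a : {pred R}).
Hypothesis ha : is_ideal a.

Lemma ideal0 : 0 \in a. Proof. by case: ha. Qed.

Lemma idealD x y : x \in a -> y \in a -> x + y \in a.
Proof. by case: ha => _ addA _; apply: addA. Qed.

Lemma idealMl r x : x \in a -> r * x \in a.
Proof. by case: ha => _ _ mulA; apply: mulA. Qed.

Lemma idealMr r x : x \in a -> x * r \in a.
Proof. by rewrite mulrC; apply: idealMl. Qed.

Lemma idealB x y : x \in a -> y \in a -> x - y \in a.
Proof. by move=> ax ay; rewrite -mulN1r; apply: idealD => //; apply: idealMl. Qed.

Lemma ideal_sum n (P : pred 'I_n) (F : 'I_n -> R) :
  (forall i, P i -> F i \in a) -> \sum_(i < n | P i) F i \in a.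
Proof. by move=> aF; apply: (big_ind (fun x => x \in a)); [apply: ideal0 | apply: idealD |]. Qed.

Lemma unit_mod1 : unit_mod a 1.
Proof. by exists 1; rewrite mulr1 subrr ideal0. Qed.

Lemma unit_mod_congr c d : unit_mod a c -> c - d \in a -> unit_mod a d.
Proof.
move=> [u acu] acd; exists u.
have -> : d * u - 1 = (c * u - 1) - (c - d) * u by ring.
by apply: idealB => //; apply: idealMr.
Qed.

Lemma unit_modM c d : unit_mod a c -> unit_mod a d -> unit_mod a (c * d).
Proof.
move=> [u acu] [v adv]; exists (u * v).
have -> : c * d * (u * v) - 1 = (c * u - 1) * (d * v) + (d * v - 1) by ring.
by apply: idealD => //; apply: idealMr.
Qed.

Lemma unit_modMl c d : unit_mod a (c * d) -> unit_mod a c.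
Proof. by move=> [u acdu]; exists (d * u); rewrite mulrA. Qed.

Lemma unit_modMr c d : unit_mod a (c * d) -> unit_mod a d.
Proof. by rewrite mulrC; apply: unit_modMl. Qed.

Lemma unit_mod_notin c : 1 \notin a -> unit_mod a c -> c \notin a.
Proof.
move=> a'1 [u acu]; apply: contra a'1 => ac.
have -> : 1 = c * u - (c * u - 1) by ring.
by apply: idealB => //; apply: idealMr.
Qed.

Lemma ps_mul_in_ideal (p q : powser R) m l i :
  (forall j, (j < m)%N -> p j \in a) -> (forall j, (j < l)%N -> q j \in a) ->
  (i < m + l)%N -> ps_mul p q i \in a.
Proof.
move=> ap aq ltiml; apply: ideal_sum => j _.
have [ltjm | lemj] := ltnP j m; first by apply: idealMr; apply: ap.
by apply: idealMl; apply: aq; have := ltn_ord j; lia.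
Qed.

Lemma ps_mul_lead_mod (p q : powser R) m l :
  (forall j, (j < m)%N -> p j \in a) -> (forall j, (j < l)%N -> q j \in a) ->
  ps_mul p q (m + l)%N - p m * q l \in a.
Proof.
move=> ap aq; have ltm : (m < (m + l).+1)%N by lia.
rewrite /ps_mul (bigD1 (Ordinal ltm)) //= addKn addrC addrK.
apply: ideal_sum => j nej.
have nejm : nat_of_ord j != m by apply: contra nej => /eqP ejm; apply/eqP/val_inj.
have [ltjm | lemj] := ltnP j m; first by apply: idealMr; apply: ap.
by apply: idealMl; apply: aq; move: nejm lemj (ltn_ord j); lia.
Qed.

Lemma distinguished_ps_mul (p q : powser R) m l :
  distinguished a p m -> distinguished a q l ->
  distinguished a (ps_mul p q) (m + l)%N.
Proof.
move=> [up ap] [uq aq]; split; last by move=> i; apply: ps_mul_in_ideal.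
apply: (unit_mod_congr (unit_modM up uq)).
by rewrite -opprB -mulN1r; apply: idealMl; apply: ps_mul_lead_mod.
Qed.

Lemma distinguished_ps_prod k (g : 'I_k -> powser R) ns :
  (forall i, distinguished a (g i) (ns i)) ->
  distinguished a (\big[@ps_mul R/ps_one R]_(i < k) g i) (\sum_(i < k) ns i).
Proof.
elim: k g ns => [|k IHk] g ns dg; first by rewrite !big_ord0; split => //; apply: unit_mod1.
rewrite !big_ord_recl; apply: distinguished_ps_mul => //.
exact: IHk (fun i => g (lift ord0 i)) _ (fun i => dg _).
Qed.

Lemma eq_distinguished (f g : powser R) n :
  f =1 g -> distinguished a f n -> distinguished a g n.
Proof. by move=> efg [uf af]; split => [|i]; rewrite -efg //; apply: af. Qed.

Lemma monic_weierstrassE (p : {poly R}) : p \is monic ->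
  weierstrass a p <-> distinguished a (fun i => p`_i) (size p).-1.
Proof.
move=> mp; split=> [[_ ap] | [_ ap]] //; split => //.
by rewrite -lead_coefE (monicP mp); apply: unit_mod1.
Qed.

Lemma weierstrassM (p q : {poly R}) :
  weierstrass a p -> weierstrass a q -> weierstrass a (p * q).
Proof.
move=> wp wq; have [mp _] := wp; have [mq _] := wq.
have mpq : p * q \is monic by rewrite monicMl.
apply/(monic_weierstrassE mpq); apply: (eq_distinguished (fsym (coefM p q))).
by rewrite predn_size_monicM //; apply: distinguished_ps_mul; apply/monic_weierstrassE.
Qed.

Lemma weierstrass_prod k (g : 'I_k -> {poly R}) :
  (forall i, weierstrass a (g i)) -> weierstrass a (\prod_(i < k) g i).
Proof.
elim: k g => [|k IHk] g wg.
  by rewrite big_ord0; split => [|i]; rewrite ?monic1 ?size_poly1.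
by rewrite big_ord_recl; apply: weierstrassM => //; apply: IHk.
Qed.

End IdealArithmetic.

Section PrimeIdeal.
Set Implicit Arguments.
Unset Strict Implicit.
Variables (R : comNzRingType) (a : {pred R}).
Hypothesis pa : is_prime_ideal a.

Let ha : is_ideal a. Proof. by case: pa. Qed.
Let a'1 : 1 \notin a. Proof. by case: pa. Qed.

Lemma prime_mul_notin u v : u \notin a -> v \notin a -> u * v \notin a.
Proof.
case: pa => _ _ primea a'u a'v; apply/negP => /primea /orP[au | av].
  by rewrite au in a'u.
by rewrite av in a'v.
Qed.

Lemma first_notin (p : powser R) : (exists j, p j \notin a) ->
  exists m, p m \notin a /\ forall j, (j < m)%N -> p j \in a.
Proof.
case/ex_minnP=> m a'pm minm; exists m; split => // j ltjm.
by apply/negPn/negP => /minm; lia.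
Qed.

Lemma ps_mul_notin_l (p q : powser R) n :
  ps_mul p q n \notin a -> exists j, p j \notin a.
Proof.
move=> a'pq.
case: (boolP [exists j : 'I_n.+1, p j \notin a]) => [/existsP[j a'pj] | /existsPn ap].
  by exists j.
case/negP: a'pq; apply: (@ps_mul_in_ideal _ _ ha _ _ n.+1 0) => // [j ltjn | ].
  by have /negPn := ap (Ordinal ltjn).
by rewrite addn0.
Qed.

Lemma ps_mul_notin_r (p q : powser R) n :
  ps_mul p q n \notin a -> exists j, q j \notin a.
Proof.
move=> a'pq.
case: (boolP [exists j : 'I_n.+1, q j \notin a]) => [/existsP[j a'qj] | /existsPn aq].
  by exists j.
case/negP: a'pq; apply: (@ps_mul_in_ideal _ _ ha _ _ 0 n.+1) => // j ltjn.
by have /negPn := aq (Ordinal ltjn).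
Qed.

Lemma ps_mul_first_notin (p q : powser R) m l :
  (forall j, (j < m)%N -> p j \in a) -> p m \notin a ->
  (forall j, (j < l)%N -> q j \in a) -> q l \notin a ->
  ps_mul p q (m + l)%N \notin a.
Proof.
move=> ap a'pm aq a'ql; apply: contra (prime_mul_notin a'pm a'ql) => apq.
have -> : p m * q l = ps_mul p q (m + l)%N - (ps_mul p q (m + l)%N - p m * q l) by ring.
by apply: idealB => //; apply: ps_mul_lead_mod.
Qed.

Lemma distinguished_ps_mul_inv (p q : powser R) n :
  distinguished a (ps_mul p q) n ->
  exists m l, [/\ n = (m + l)%N, distinguished a p m & distinguished a q l].
Proof.
move=> [upq apq]; have a'pq := unit_mod_notin ha a'1 upq.
have [m [a'pm ap]] := first_notin (ps_mul_notin_l a'pq).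
have [l [a'ql aq]] := first_notin (ps_mul_notin_r a'pq).
have en : n = (m + l)%N.
  case: (ltngtP n (m + l)) => // [ltn | gtn].
    by rewrite (ps_mul_in_ideal ha ap aq ltn) in a'pq.
  by have := ps_mul_first_notin ap a'pm aq a'ql; rewrite apq.
have upmql : unit_mod a (p m * q l).
  by rewrite en in upq; apply: unit_mod_congr upq _ => //; apply: ps_mul_lead_mod.
exists m, l; split => //; split => //.
  exact: unit_modMl upmql.
exact: unit_modMr upmql.
Qed.

Lemma distinguished_ps_prod_inv k (g : 'I_k -> powser R) n :
  distinguished a (\big[@ps_mul R/ps_one R]_(i < k) g i) n ->
  exists ns : 'I_k -> nat,
    n = (\sum_(i < k) ns i)%N /\ forall i, distinguished a (g i) (ns i).
Proof.
elim: k g n => [|k IHk] g n.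
  rewrite big_ord0 => -[_ a1]; exists (fun _ => 0%N); split => [|[]//].
  case: n a1 => [|n] a1; first by rewrite big_ord0.
  by have := a1 0%N isT; rewrite /ps_one /= (negPf a'1).
rewrite big_ord_recl => /distinguished_ps_mul_inv[m [l [-> dg0 dQ]]].
have [ns [-> dgs]] := IHk (fun i => g (lift ord0 i)) l dQ.
exists (fun i => if unlift ord0 i is Some j then ns j else m); split.
  by rewrite big_ord_recl unlift_none; congr (_ + _)%N; apply: eq_bigr => i _; rewrite liftK.
by move=> i; case: (unliftP ord0 i) => [j -> | ->].
Qed.

Lemma monic_distinguished_order_le (p : {poly R}) m : p \is monic ->
  distinguished a (fun i => p`_i) m -> (m <= (size p).-1)%N.
Proof.
move=> mp [_ ap]; rewrite leqNgt; apply: contraNN a'1 => /ap.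
by rewrite -lead_coefE (monicP mp).
Qed.

Lemma weierstrassM_inv (p q : {poly R}) : p \is monic -> q \is monic ->
  weierstrass a (p * q) -> weierstrass a p /\ weierstrass a q.
Proof.
move=> mp mq wpq; have mpq : p * q \is monic by rewrite monicMl.
have /(eq_distinguished (coefM p q)) := iffLR (monic_weierstrassE ha mpq) wpq.
move=> /distinguished_ps_mul_inv[m [l [eml dp dq]]].
have lemp := monic_distinguished_order_le mp dp; have lelq := monic_distinguished_order_le mq dq.
rewrite predn_size_monicM // in eml.
have em : m = (size p).-1 by lia.
have el : l = (size q).-1 by lia.
by rewrite em in dp; rewrite el in dq; split; apply/monic_weierstrassE.
Qed.

Lemma weierstrass_prod_inv k (g : 'I_k -> {poly R}) :
  (forall i, g i \is monic) -> weierstrass a (\prod_(i < k) g i) ->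
  forall i, weierstrass a (g i).
Proof.
elim: k g => [|k IHk] g mg; first by move=> _ [].
rewrite big_ord_recl => /weierstrassM_inv[] //; first exact: monic_prod.
move=> wg0 wQ i; case: (unliftP ord0 i) => [j -> | -> //].
exact: IHk (fun i => g (lift ord0 i)) _ wQ j.
Qed.

End PrimeIdeal.

Theorem lemma3p10 (R : comNzRingType) (a : {pred R}) (ha : is_ideal a) :
  (* (1) and its converse for prime a *)
  (forall (k : nat) (f : {poly R}) (g : 'I_k -> {poly R}),
      f \is monic -> (forall i, g i \is monic) -> f = \prod_(i < k) g i ->
      ((forall i, weierstrass a (g i)) -> weierstrass a f) /\
      (is_prime_ideal a -> weierstrass a f -> forall i, weierstrass a (g i))) /\
  (* (2) and its converse for prime a *)
  (forall (k : nat) (f : powser R) (g : 'I_k -> powser R) (n : nat),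
      f = \big[@ps_mul R/ps_one R]_(i < k) g i ->
      ((exists ns : 'I_k -> nat,
          n = (\sum_(i < k) ns i)%N /\ forall i, distinguished a (g i) (ns i)) ->
        distinguished a f n) /\
      (is_prime_ideal a -> distinguished a f n ->
        exists ns : 'I_k -> nat,
          n = (\sum_(i < k) ns i)%N /\ forall i, distinguished a (g i) (ns i))).
Proof.
split=> [k f g _ mg -> | k f g n ->]; split.
- exact: weierstrass_prod.
- by move=> pa; apply: weierstrass_prod_inv.
- by move=> [ns [-> dg]]; apply: distinguished_ps_prod.
- by move=> pa; apply: distinguished_ps_prod_inv.
Qed.
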